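(* Let $\Gamma$ be a $2$-arc-transitive strongly regular graph. Then either $\Gamma$ is a complete bipartite graph, or $\Gamma\cong C_5$, or $|\Gamma(u)|<|\Gamma_2(u)|$ for every vertex $u$.
   Context: A strongly regular graph with parameters $(n,k,a,c)$ is a connected $k$-regular graph on $n$ vertices in which adjacent vertices have $a$ common neighbours and distinct non-adjacent vertices have $c$ common neighbours (here of diameter $2$, i.e. non-complete). $2$-arc-transitive means $\mathrm{Aut}(\Gamma)$ is transitive on vertices, on arcs and on $2$-arcs $(v_0,v_1,v_2)$ ($v_0\sim v_1\sim v_2$, $v_0\ne v_2$). $\Gamma(u)$ is the set of neighbours of $u$ and $\Gamma_2(u)$ the set of vertices at distance $2$ from $u$. *)

From mathcomp Require Import all_boot fingroup perm.
Set Implicit Arguments. Unset Strict Implicit. Unset Printing Implicit Defensive.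

Definition simple_graph (T : finType) (e : rel T) : Prop :=
  symmetric e /\ irreflexive e.

Definition nbhd (T : finType) (e : rel T) (u : T) : {set T} := [set x | e u x].
Definition nbhd2 (T : finType) (e : rel T) (u : T) : {set T} :=
  [set x | [&& x != u, ~~ e u x & [exists w, e u w && e w x]]].

Definition connected_graph (T : finType) (e : rel T) : Prop :=
  forall x y : T, connect e x y.

Definition srg_params (T : finType) (e : rel T) (k a c : nat) : Prop :=
  [/\ simple_graph e /\ connected_graph e,
      (exists x y : T, (x != y) && ~~ e x y),
      (forall u : T, #|nbhd e u| = k),
      (forall u v : T, e u v -> #|nbhd e u :&: nbhd e v| = a) &
      (forall u v : T, u != v -> ~~ e u v -> #|nbhd e u :&: nbhd e v| = c)].

Definition strongly_regular (T : finType) (e : rel T) : Prop :=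
  exists k a c, srg_params e k a c.

Definition is_aut (T : finType) (e : rel T) (g : {perm T}) : Prop :=
  forall x y : T, e (g x) (g y) = e x y.

Definition vertex_transitive (T : finType) (e : rel T) : Prop :=
  forall x y : T, exists g : {perm T}, is_aut e g /\ g x = y.

Definition arc_transitive (T : finType) (e : rel T) : Prop :=
  forall x0 x1 y0 y1 : T, e x0 x1 -> e y0 y1 ->
    exists g : {perm T}, [/\ is_aut e g, g x0 = y0 & g x1 = y1].

Definition two_arc (T : finType) (e : rel T) (v0 v1 v2 : T) : Prop :=
  [/\ e v0 v1, e v1 v2 & v0 != v2].

Definition two_arc_transitive_on (T : finType) (e : rel T) : Prop :=
  forall x0 x1 x2 y0 y1 y2 : T, two_arc e x0 x1 x2 -> two_arc e y0 y1 y2 ->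
    exists g : {perm T}, [/\ is_aut e g, g x0 = y0, g x1 = y1 & g x2 = y2].

Definition two_arc_transitive (T : finType) (e : rel T) : Prop :=
  [/\ vertex_transitive e, arc_transitive e & two_arc_transitive_on e].

Definition complete_bipartite (T : finType) (e : rel T) : Prop :=
  exists A : {set T}, [/\ A != set0, ~: A != set0 &
    forall x y : T, e x y = ((x \in A) != (y \in A))].

Definition cycle_rel (n : nat) : rel 'I_n :=
  fun i j => (val j == (val i).+1 %% n) || (val i == (val j).+1 %% n).

Definition iso_C5 (T : finType) (e : rel T) : Prop :=
  exists f : T -> 'I_5, bijective f /\
    forall x y : T, e x y = @cycle_rel 5 (f x) (f y).

From mathcomp Require Import all_boot fingroup perm zify.
Set Implicit Arguments. Unset Strict Implicit. Unset Printing Implicit Defensive.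

(* Since Γ is connected and not complete, some 2-arc (x, v, w) has x and w
   non-adjacent; by 2-arc transitivity every 2-arc does, i.e. Γ is
   triangle-free. Counting the paths u - x - w with w in Γ2(u) then gives
   c |Γ2(u)| = k (k - 1), where k is the valency and c the number of common
   neighbours of two non-adjacent vertices. As 1 <= c <= k, this forces
   |Γ2(u)| > k unless c = k or c = k - 1. If c = k, non-adjacent vertices have
   equal neighbourhoods and Γ is complete bipartite. If c < k, some edge v w
   has both ends distinct from and non-adjacent to u; the common neighbours of
   u with v and with w are disjoint, so 2c <= k, and c = k - 1 leaves only
   k = 2, c = 1, |Γ| = 1 + 2 + 2 = 5: the pentagon. *)

Definition triangle_free (T : finType) (e : rel T) : Prop :=
  forall u v w, e u v -> e v w -> ~~ e u w.

Lemma card_gt1_other (T : finType) (A : {set T}) a :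
  1 < #|A| -> exists2 b, b \in A & b != a.
Proof.
move=> A_gt1; have : 0 < #|A :\ a| by move: (cardsD1 a A); case: (a \in A) => /=; lia.
by case/card_gt0P => b; rewrite !inE => /andP[]; exists b.
Qed.

Lemma card_setI_sum (T : finType) (A B : {set T}) : #|A :&: B| = \sum_(x in A) (x \in B).
Proof.
rewrite -sum1_card big_mkcond [RHS]big_mkcond; apply: eq_bigr => x _.
by rewrite inE; case: (x \in A); case: (x \in B).
Qed.

Lemma cycle_rel5_inj (i j : 'I_5) : cycle_rel i =1 cycle_rel j -> i = j.
Proof.
move=> eq_ij; have at_k k (lt_k5 : k < 5) := eq_ij (Ordinal lt_k5); apply/val_inj.
move: (at_k 0 isT) (at_k 1 isT) (at_k 2 isT) (at_k 3 isT) (at_k 4 isT).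
by case: i j {eq_ij at_k} => [[|[|[|[|[|?]]]]] ?] // [[|[|[|[|[|?]]]]] ?].
Qed.

Lemma iso_C5_of_cycle_rel (T : finType) (e : rel T) (g : 'I_5 -> T) :
  (forall i j, e (g i) (g j) = cycle_rel i j) -> #|T| <= 5 -> iso_C5 e.
Proof.
move=> eg cardT; have g_inj : injective g.
  by move=> i j gij; apply: cycle_rel5_inj => k; rewrite -!eg gij.
have [f gK fK] : bijective g by apply: inj_card_bij; rewrite ?card_ord.
by exists f; split=> [|x y]; [exists g | rewrite -eg !fK].
Qed.

Section Graph.

Variables (T : finType) (e : rel T).
Hypotheses (e_sym : symmetric e) (e_irr : irreflexive e).

Lemma nbhd2_neq0 x y : x != y -> ~~ e x y -> connect e x y -> nbhd2 e x != set0.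
Proof.
move=> xy nexy; apply: contraTneq => nbhd2x0.
have ball_closed : closed e (x |: nbhd e x).
  apply: intro_closed; first exact: sym_connect_sym.
  move=> z w ezw; rewrite !inE => /orP[/eqP zx|exz]; first by rewrite -zx ezw orbT.
  apply/contraT => /norP[wx nexw]; suff : w \in nbhd2 e x by rewrite nbhd2x0 inE.
  by rewrite inE wx nexw; apply/existsP; exists z; rewrite exz.
apply/negP => /(closed_connect ball_closed).
by rewrite !inE eqxx eq_sym (negbTE xy) (negbTE nexy).
Qed.

Lemma two_arc_transitive_triangle_free x v w :
  two_arc_transitive_on e -> two_arc e x v w -> ~~ e x w -> triangle_free e.
Proof.
move=> arc2 xvw nexw u u' u'' euu' eu'u''.
have [->|uu''] := eqVneq u u''; first by rewrite e_irr.
have [g [aut_g <- _ <-]] := arc2 _ _ _ _ _ _ xvw (And3 euu' eu'u'' uu'').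
by rewrite aut_g.
Qed.

Lemma card_diameter2 u :
  (forall w, w != u -> ~~ e u w -> exists z, e u z && e z w) ->
  #|T| = (#|nbhd e u| + #|nbhd2 e u|).+1.
Proof.
move=> diam2; have -> : #|T| = #|u |: (nbhd e u :|: nbhd2 e u)|.
  apply: eq_card => w; rewrite !inE.
  have [//|wu] := eqVneq w u; case: (boolP (e u w)) => //= neuw.
  by apply/esym/existsP; apply: diam2.
rewrite cardsU1 !inE e_irr eqxx /= add1n; congr _.+1; apply/eqP.
rewrite (leq_card_setU _ _).2 -setI_eq0; apply/eqP/setP => w; rewrite !inE.
by case: (e u w); rewrite /= ?andbF.
Qed.

Hypothesis e_tf : triangle_free e.

Lemma nbhd2I_nbhd u x : e u x -> nbhd2 e u :&: nbhd e x = nbhd e x :\ u.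
Proof.
move=> eux; apply/setP => w; rewrite !inE andbC [RHS]andbC; case exw: (e x w) => //=.
have -> : [exists z, e u z && e z w] by apply/existsP; exists x; rewrite eux exw.
by rewrite (e_tf eux exw) !andbT.
Qed.

Lemma sum_card_common_nbhd2 u :
  \sum_(w in nbhd2 e u) #|nbhd e u :&: nbhd e w| = \sum_(x in nbhd e u) #|nbhd e x :\ u|.
Proof.
under eq_bigr => w _ do rewrite card_setI_sum.
rewrite exchange_big; apply: eq_bigr => x; rewrite inE => eux.
by rewrite -(nbhd2I_nbhd eux) card_setI_sum; apply: eq_bigr => w _; rewrite !inE e_sym.
Qed.

Lemma card_common_nbhd_edge u v w :
  e v w -> #|nbhd e u :&: nbhd e v| + #|nbhd e u :&: nbhd e w| <= #|nbhd e u|.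
Proof.
move=> evw; set Nv := nbhd e u :&: nbhd e v; set Nw := nbhd e u :&: nbhd e w.
have disjoint_common : [disjoint Nv & Nw].
  rewrite -setI_eq0; apply/eqP/setP => z; rewrite !inE.
  by case: (boolP (e w z)) => ewz; rewrite ?andbF // (negbTE (e_tf evw ewz)) andbF.
have /eqP <- : #|Nv :|: Nw| == #|Nv| + #|Nw| by rewrite (leq_card_setU _ _).2.
by apply: subset_leq_card; rewrite subUset !subsetIl.
Qed.

Lemma nonadj_twins_complete_bipartite x y :
  e x y -> (forall u w, u != w -> ~~ e u w -> nbhd e u = nbhd e w) -> complete_bipartite e.
Proof.
move=> exy twins; exists [set z | ~~ e x z]; split.
- by apply/set0Pn; exists x; rewrite inE e_irr.
- by apply/set0Pn; exists y; rewrite !inE exy.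
have e_nonadj z z' : ~~ e x z -> e z z' = e x z'.
  have [<-|xz nexz] := eqVneq x z => //.
  by move: (twins _ _ xz nexz) => /setP/(_ z'); rewrite !inE.
move=> z z'; rewrite !inE.
case exz: (e x z); last by rewrite e_nonadj ?exz //=; case: (e x z').
case exz': (e x z') => /=; last by rewrite e_sym e_nonadj ?exz'.
by apply/negbTE/(e_tf (_ : e z x) exz'); rewrite e_sym.
Qed.

Lemma closed_walk5_cycle_rel p0 p1 p2 p3 p4 :
  e p0 p1 -> e p1 p2 -> e p2 p3 -> e p3 p4 -> e p4 p0 ->
  forall i j : 'I_5,
    e (nth p0 [:: p0; p1; p2; p3; p4] i) (nth p0 [:: p0; p1; p2; p3; p4] j) = cycle_rel i j.
Proof.
move=> e01 e12 e23 e34 e40.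
(* the non-edges of the pentagon are its chords p_i p_(i+2) *)
have ne02 := e_tf e01 e12; have ne13 := e_tf e12 e23; have ne24 := e_tf e23 e34.
have ne30 := e_tf e34 e40; have ne41 := e_tf e40 e01.
case=> [[|[|[|[|[|?]]]]] ?] // [[|[|[|[|[|?]]]]] ?] //; rewrite /cycle_rel /=.
all: first [ by rewrite e_irr | by [] | by rewrite e_sym | by apply/negbTE
           | by rewrite e_sym; apply/negbTE ].
Qed.

Section StronglyRegular.

Variables k c : nat.
Hypothesis regular : forall u, #|nbhd e u| = k.
Hypothesis common_nonadj : forall u w, u != w -> ~~ e u w -> #|nbhd e u :&: nbhd e w| = c.

Lemma srg_count u : c * #|nbhd2 e u| = k * k.-1.
Proof.
have lhs : \sum_(w in nbhd2 e u) #|nbhd e u :&: nbhd e w| = #|nbhd2 e u| * c.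
  rewrite -sum_nat_const; apply: eq_bigr => w; rewrite inE => /and3P[wu neuw _].
  by rewrite common_nonadj // eq_sym.
have rhs : \sum_(x in nbhd e u) #|nbhd e x :\ u| = k * k.-1.
  rewrite -{1}(regular u) -sum_nat_const; apply: eq_bigr => x; rewrite inE => eux.
  by move: (cardsD1 u (nbhd e x)); rewrite regular inE e_sym eux add1n => ->.
by rewrite mulnC -lhs -rhs sum_card_common_nbhd2.
Qed.

Lemma srg_twins : c = k -> forall u w, u != w -> ~~ e u w -> nbhd e u = nbhd e w.
Proof.
move=> ck u w uw neuw; have card_uw := common_nonadj uw neuw.
have eq_u : nbhd e u :&: nbhd e w = nbhd e u.
  by apply/eqP; rewrite eqEcard subsetIl card_uw ck regular leqnn.
have eq_w : nbhd e u :&: nbhd e w = nbhd e w.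
  by apply/eqP; rewrite eqEcard subsetIr card_uw ck regular leqnn.
by rewrite -eq_u eq_w.
Qed.

Lemma srg_double_c_le_k u v : c < k -> u != v -> ~~ e u v -> c.*2 <= k.
Proof.
move=> c_lt_k uv neuv; have /subsetPn[w] : ~~ (nbhd e v \subset nbhd e u).
  apply: contraTN c_lt_k => /setIidPr NuNv.
  by rewrite -leqNgt -(regular v) -NuNv common_nonadj.
rewrite !inE => evw neuw; have uw : u != w by apply: contraNneq neuv => ->; rewrite e_sym.
by have := card_common_nbhd_edge u evw; rewrite !common_nonadj // regular -addnn.
Qed.

Lemma srg_iso_C5 (x : T) : k = 2 -> c = 1 -> iso_C5 e.
Proof.
move=> k2 c1; have [p1 [p4 [p14 Nx]]] : exists p1 p4, p1 != p4 /\ nbhd e x = [set p1; p4].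
  by apply/cards2P; rewrite regular k2.
have ex1 : e x p1 by move: (set21 p1 p4); rewrite -Nx inE.
have ex4 : e x p4 by move: (set22 p1 p4); rewrite -Nx inE.
have [p2] : exists2 p2, p2 \in nbhd e p1 & p2 != x by apply: card_gt1_other; rewrite regular k2.
rewrite inE eq_sym => e12 xp2; have nex2 := e_tf ex1 e12.
have ne14 : ~~ e p1 p4 by apply: e_tf ex4; rewrite e_sym.
have p24 : p2 != p4 by apply: contraNneq ne14 => <-.
have ne24 : ~~ e p2 p4.
  (* otherwise p1 and p4 would both be common neighbours of x and p2 *)
  apply/negP => e24; have : nbhd e x \subset nbhd e p2.
    by rewrite Nx; apply/subsetP => z; rewrite !inE => /orP[]/eqP->; rewrite // e_sym.
  move/setIidPl => NxI; have := common_nonadj xp2 nex2.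
  by rewrite NxI regular k2 c1.
have [p3] : exists p3, p3 \in nbhd e p2 :&: nbhd e p4.
  by apply/card_gt0P; rewrite common_nonadj ?c1.
rewrite !inE => /andP[e23]; rewrite e_sym => e34; have e4x : e p4 x by rewrite e_sym.
apply: (iso_C5_of_cycle_rel (closed_walk5_cycle_rel ex1 e12 e23 e34 e4x)).
have diam2 w : w != x -> ~~ e x w -> exists z, e x z && e z w.
  move=> wx nexw; have : 0 < #|nbhd e x :&: nbhd e w| by rewrite common_nonadj 1?eq_sym ?c1.
  by case/card_gt0P => z; rewrite !inE => /andP[exz ewz]; exists z; rewrite exz e_sym.
have := srg_count x; rewrite (card_diameter2 diam2) regular k2 c1; lia.
Qed.

End StronglyRegular.

End Graph.

Theorem lemma4p2 (T : finType) (e : rel T) :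
  strongly_regular e -> two_arc_transitive e ->
  complete_bipartite e \/ iso_C5 e \/
  (forall u : T, #|nbhd e u| < #|nbhd2 e u|).
Proof.
move=> [k [_ [c [[[e_sym e_irr] conn] [x [y /andP[xy nexy]]] regular _ common_nonadj]]]].
move=> [_ _ arc2].
have /set0Pn[v2] := nbhd2_neq0 e_sym xy nexy (conn x y).
rewrite inE => /and3P[v2x nexv2 /existsP[v1 /andP[exv1 ev1v2]]].
have xv2 : x != v2 by rewrite eq_sym.
have e_tf := two_arc_transitive_triangle_free e_irr arc2 (And3 exv1 ev1v2 xv2) nexv2.
have c_xv2 := common_nonadj x v2 xv2 nexv2.
have c_gt0 : 0 < c by rewrite -c_xv2; apply/card_gt0P; exists v1; rewrite !inE exv1 e_sym.
have c_le_k : c <= k by rewrite -c_xv2 -(regular x) subset_leq_card ?subsetIl.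
have [c_eq_k|[c_eq_k1|c_le_k2]] : c = k \/ c = k.-1 \/ c <= k - 2 by lia.
- left; apply: (nonadj_twins_complete_bipartite e_sym e_irr e_tf exv1).
  exact: srg_twins regular common_nonadj c_eq_k.
- have c_lt_k : c < k by lia.
  have dc_le_k := srg_double_c_le_k e_sym e_tf regular common_nonadj c_lt_k xv2 nexv2.
  by right; left; apply: (srg_iso_C5 e_sym e_irr e_tf regular common_nonadj x); lia.
- right; right => u; rewrite regular.
  have := srg_count e_sym e_tf regular common_nonadj u; nia.
Qed.
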